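(* Let $\lambda^*\in\Lambda$ be a maximizer of the dual function $d$ over $\Lambda$, and suppose the triangle scaling property holds with constant $G\ge1$. For $T\ge1$ let $S_{T-1}=\sum_{k=0}^{T-1}\eta_k/\theta_k$ and $$\tilde x_T=\frac{1}{S_{T-1}}\sum_{k=0}^{T-1}\frac{\eta_k}{\theta_k}x_{k+1},\qquad\tilde\lambda_T=\frac{1}{S_{T-1}}\sum_{k=0}^{T-1}\frac{\eta_k}{\theta_k}\lambda_{k+1}.$$ Then the acc-BALM iterates satisfy, for all $x\in\mathcal{X}$, $\lambda\in\Lambda$, $$L(\tilde x_T,\lambda)-L(x,\tilde\lambda_T)\le\frac{G\,D_h(\lambda,\lambda_0)+G\,D_h(\lambda^*,\lambda_0)\sum_{k=0}^{T-1}\theta_k}{S_{T-1}}.$$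
   Context: Problem: $\min_{x\in\mathcal{X}}f(x)$ s.t. $Ax=b$ (with $\Lambda=\mathbb{R}^m$) or s.t. $Ax\le b$ (with $\Lambda=\mathbb{R}^m_+$); $f$ closed convex coercive, $\mathcal{X}\subseteq\mathbb{R}^n$ closed convex, $A\in\mathbb{R}^{m\times n}$, $b\in\mathbb{R}^m$; $L(x,\lambda)=f(x)+\lambda^\top(Ax-b)$, $d(\lambda)=\inf_{x\in\mathcal{X}}L(x,\lambda)$. $h:\Lambda\to\mathbb{R}$ proper, coercive, strictly convex, continuously differentiable on $\Lambda$; $D_h(\lambda,\tilde\lambda)=h(\lambda)-h(\tilde\lambda)-\nabla h(\tilde\lambda)^\top(\lambda-\tilde\lambda)$. Triangle scaling property with constant $G$: $D_h((1-\theta)\lambda+\theta\lambda_1,(1-\theta)\lambda+\theta\lambda_2)\le G\theta^2D_h(\lambda_1,\lambda_2)$ for all $\lambda,\lambda_1,\lambda_2\in\Lambda$, $\theta\in[0,1]$. Algorithm acc-BALM: given $\lambda_0\in\Lambda$, $v_0=\lambda_0$, $\theta_0=1$, $\eta_k>0$; for $k\ge0$: $y_k=\theta_kv_k+(1-\theta_k)\lambda_k$; $(x_{k+1},\lambda_{k+1})\in\mathcal{X}\times\Lambda$ is a saddle point on $\mathcal{X}\times\Lambda$ (min in $x$, max in $\lambda$) of $L(x,\lambda)-\frac1{\eta_k}D_h(\lambda,y_k)$; $v_{k+1}\in\arg\max_{\lambda\in\Lambda}\big\{-GD_h(\lambda,\lambda_0)+\sum_{j=0}^k\frac{\eta_j}{\theta_j}\big(d(\lambda_{j+1})+\frac1{\eta_j}(\nabla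 h(\lambda_{j+1})-\nabla h(y_j))^\top(\lambda-\lambda_{j+1})\big)\big\}$; $\theta_{k+1}\in(0,1]$ is defined by $\frac{\eta_k}{\theta_k^2}=\frac{\eta_{k+1}}{\theta_{k+1}^2}-\frac{\eta_{k+1}}{\theta_{k+1}}$. All saddle points and maximizers are assumed to exist. *)

From Stdlib Require Import Reals Lra.
Open Scope R_scope.

(* Vectors of R^n are modelled as functions nat -> R supported on the
   first n coordinates (see [supp]). *)
Definition vec := nat -> R.

Fixpoint rsum (T : nat) (g : nat -> R) : R :=
  match T with
  | O => 0
  | S t => rsum t g + g t
  end.

Definition supp (n : nat) (v : vec) : Prop := forall i, (n <= i)%nat -> v i = 0.

Definition dot (n : nat) (u v : vec) : R := rsum n (fun i => u i * v i).
Definition vnorm (n : nat) (v : vec) : R := sqrt (dot n v v).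
Definition vlin (a : R) (u : vec) (c : R) (v : vec) : vec := fun i => a * u i + c * v i.
Definition vsub (u v : vec) : vec := fun i => u i - v i.

Definition resid (m n : nat) (A : nat -> nat -> R) (b : vec) (x : vec) : vec :=
  fun i => if Nat.ltb i m then rsum n (fun j => A i j * x j) - b i else 0.

Definition Lag (m n : nat) (f : vec -> R) (A : nat -> nat -> R) (b : vec)
  (x lam : vec) : R := f x + dot m lam (resid m n A b x).

(* Lambda = R^m (ineq = false) or R^m_+ (ineq = true) *)
Definition LamSet (m : nat) (ineq : bool) (lam : vec) : Prop :=
  supp m lam /\ (ineq = true -> forall i, (i < m)%nat -> 0 <= lam i).

Definition Breg (m : nat) (h : vec -> R) (gh : vec -> vec) (lam lam' : vec) : R :=
  h lam - h lam' - dot m (gh lam') (vsub lam lam').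

Definition closed_subset (n : nat) (X : vec -> Prop) : Prop :=
  forall (xs : nat -> vec) (x : vec), (forall k, X (xs k)) -> supp n x ->
    (forall i, (i < n)%nat -> Un_cv (fun k => xs k i) (x i)) -> X x.
Definition convex_subset (X : vec -> Prop) : Prop :=
  forall x y t, X x -> X y -> 0 <= t <= 1 -> X (vlin t x (1 - t) y).

Definition convex_on (S : vec -> Prop) (g : vec -> R) : Prop :=
  forall x y t, S x -> S y -> 0 <= t <= 1 ->
    g (vlin t x (1 - t) y) <= t * g x + (1 - t) * g y.
Definition strictly_convex_on (S : vec -> Prop) (g : vec -> R) : Prop :=
  forall x y t, S x -> S y -> x <> y -> 0 < t < 1 ->
    g (vlin t x (1 - t) y) < t * g x + (1 - t) * g y.
Definition lsc_on (n : nat) (S : vec -> Prop) (g : vec -> R) : Prop :=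
  forall x eps, S x -> 0 < eps -> exists delta, 0 < delta /\
    forall y, S y -> vnorm n (vsub y x) < delta -> g x - eps < g y.
Definition coercive_on (n : nat) (S : vec -> Prop) (g : vec -> R) : Prop :=
  forall M, exists R0, forall x, S x -> R0 < vnorm n x -> M < g x.
Definition C1_on (n : nat) (S : vec -> Prop) (g : vec -> R) (gg : vec -> vec) : Prop :=
  (forall x, S x -> supp n (gg x)) /\
  (forall x eps, S x -> 0 < eps -> exists delta, 0 < delta /\
     forall y, S y -> vnorm n (vsub y x) < delta ->
       Rabs (g y - g x - dot n (gg x) (vsub y x)) <= eps * vnorm n (vsub y x)) /\
  (forall x eps, S x -> 0 < eps -> exists delta, 0 < delta /\
     forall y, S y -> vnorm n (vsub y x) < delta ->
       vnorm n (vsub (gg y) (gg x)) < eps).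

Definition lower_bd (X : vec -> Prop) (Lf : vec -> vec -> R) (lam : vec) (r : R) : Prop :=
  forall x, X x -> r <= Lf x lam.
Definition is_dual_value (X : vec -> Prop) (Lf : vec -> vec -> R) (lam : vec) (r : R) : Prop :=
  lower_bd X Lf lam r /\ forall r', lower_bd X Lf lam r' -> r' <= r.
(* lamstar maximizes d over Lambda (d may take the value -infinity elsewhere) *)
Definition dual_maximizer (X Lam : vec -> Prop) (Lf : vec -> vec -> R) (lamstar : vec) : Prop :=
  Lam lamstar /\ exists dstar, is_dual_value X Lf lamstar dstar /\
    forall lam r, Lam lam -> lower_bd X Lf lam r -> r <= dstar.

Definition triangle_scaling (Lam : vec -> Prop) (D : vec -> vec -> R) (G : R) : Prop :=
  forall lam l1 l2 t, Lam lam -> Lam l1 -> Lam l2 -> 0 <= t <= 1 ->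
    D (vlin (1 - t) lam t l1) (vlin (1 - t) lam t l2) <= G * t ^ 2 * D l1 l2.

Definition ergavg (eta theta : nat -> R) (z : nat -> vec) (T : nat) : vec :=
  fun i => rsum T (fun k => eta k / theta k * z (S k) i) / rsum T (fun k => eta k / theta k).

(* The lambda-step of acc-BALM puts L(x_{k+1}, .) below the linear model l_k of the
   dual function at lambda_{k+1}, and v_{k+1} maximizes the estimate function
   phi_k = - G D_h(., lambda_0) + sum_{j<=k} (eta_j/theta_j) l_j.  Since phi_k + G h is
   affine, phi_k falls by G D_h(., v_{k+1}) away from its maximizer; combined with the
   triangle scaling property this gives, by induction, phi_k(v_{k+1}) <= S_k d(lambda_{k+1})
   with S_k = eta_k/theta_k^2.  Evaluating phi_k at lamstar bounds
   sum_k (eta_k/theta_k)(d(lamstar) - d(lambda_{k+1})) by G D_h(lamstar, lambda_0) sum_k theta_k,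
   which bounds the weighted primal-dual gap; Jensen's inequality passes to the averages. *)

From Stdlib Require Import Reals Lra Psatz FunctionalExtensionality Classical.
Open Scope R_scope.

Lemma rsum_S T g : rsum (S T) g = rsum T g + g T.
Proof. reflexivity. Qed.

Lemma rsum_ext T f g : (forall i, f i = g i) -> rsum T f = rsum T g.
Proof. intros H; induction T; simpl; [reflexivity | rewrite IHT, H; reflexivity]. Qed.

Lemma rsum_linear T a c f g :
  rsum T (fun i => a * f i + c * g i) = a * rsum T f + c * rsum T g.
Proof. induction T; simpl; [ring | rewrite IHT; ring]. Qed.

Lemma rsum_scal T c f : rsum T (fun i => c * f i) = c * rsum T f.
Proof. induction T; simpl; [ring | rewrite IHT; ring]. Qed.

Lemma rsum_le T f g : (forall i, (i < T)%nat -> f i <= g i) -> rsum T f <= rsum T g.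
Proof.
  induction T; intros H; simpl; [lra |].
  apply Rplus_le_compat; [apply IHT; intros; apply H | apply H]; lia.
Qed.

Lemma rsum_pos T w : (forall k, 0 < w k) -> 0 < rsum (S T) w.
Proof.
  intros H; induction T; simpl in *; [specialize (H 0%nat) | specialize (H (S T))]; lra.
Qed.

Lemma dot_vlin_l m a p c q r : dot m (vlin a p c q) r = a * dot m p r + c * dot m q r.
Proof. unfold dot. rewrite <- rsum_linear. apply rsum_ext; intros; unfold vlin; ring. Qed.

Lemma dot_vlin_r m a p c q r : dot m r (vlin a p c q) = a * dot m r p + c * dot m r q.
Proof. unfold dot. rewrite <- rsum_linear. apply rsum_ext; intros; unfold vlin; ring. Qed.

Lemma dot_vsub_l m p q r : dot m (vsub p q) r = dot m p r - dot m q r.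
Proof.
  replace (vsub p q) with (vlin 1 p (-1) q) by (extensionality i; unfold vlin, vsub; ring).
  rewrite dot_vlin_l. ring.
Qed.

Lemma dot_vsub_r m g u a b : dot m g (vsub u b) = dot m g (vsub u a) + dot m g (vsub a b).
Proof.
  replace (vsub u b) with (vlin 1 (vsub u a) 1 (vsub a b))
    by (extensionality i; unfold vlin, vsub; ring).
  rewrite dot_vlin_r. ring.
Qed.

Lemma dot_scal_r m u w t : dot m u (fun i => t * w i) = t * dot m u w.
Proof. unfold dot. rewrite <- rsum_scal. apply rsum_ext; intros; ring. Qed.

Lemma vnorm_scal m u t : 0 <= t -> vnorm m (fun i => t * u i) = t * vnorm m u.
Proof.
  intros Ht. unfold vnorm, dot.
  rewrite (rsum_ext _ _ (fun i => (t * t) * (u i * u i))) by (intros; ring).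
  rewrite rsum_scal, sqrt_mult_alt, sqrt_square by nra. reflexivity.
Qed.

Definition affine (g : vec -> R) : Prop :=
  forall p q t, g (vlin t p (1 - t) q) = t * g p + (1 - t) * g q.

Lemma dot_vsub_affine m g a : affine (fun l => dot m g (vsub l a)).
Proof.
  intros p q t.
  replace (vsub (vlin t p (1 - t) q) a) with (vlin t (vsub p a) (1 - t) (vsub q a))
    by (extensionality i; unfold vlin, vsub; ring).
  apply dot_vlin_r.
Qed.

Lemma Lag_affine m n f A b x : affine (Lag m n f A b x).
Proof. intros p q t. unfold Lag. rewrite dot_vlin_l. ring. Qed.

Lemma resid_vlin m n A b p q t :
  resid m n A b (vlin t p (1 - t) q) = vlin t (resid m n A b p) (1 - t) (resid m n A b q).
Proof.
  extensionality i. unfold resid, vlin. destruct (Nat.ltb i m); [| ring].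
  rewrite (rsum_ext _ _ (fun j => t * (A i j * p j) + (1 - t) * (A i j * q j))) by (intros; ring).
  rewrite rsum_linear. ring.
Qed.

Lemma Lag_convex m n f A b l :
  convex_on (supp n) f -> convex_on (supp n) (fun x => Lag m n f A b x l).
Proof.
  intros Hf p q t Hp Hq Ht. unfold Lag. rewrite resid_vlin, dot_vlin_r.
  specialize (Hf p q t Hp Hq Ht). lra.
Qed.

Lemma supp_convex n : convex_subset (supp n).
Proof. intros p q t Hp Hq _ i Hi. unfold vlin. rewrite Hp, Hq by exact Hi. ring. Qed.

Lemma LamSet_convex m ineq : convex_subset (LamSet m ineq).
Proof.
  intros p q t [Sp Np] [Sq Nq] Ht. split.
  - apply supp_convex; assumption.
  - intros E i Hi. unfold vlin. specialize (Np E i Hi). specialize (Nq E i Hi). nra.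
Qed.

Lemma convex_on_opp_affine S g : affine g -> convex_on S (fun p => - g p).
Proof. intros Hg p q t _ _ _. rewrite Hg. lra. Qed.

Lemma convex_on_strictly S g : strictly_convex_on S g -> convex_on S g.
Proof.
  intros Hg p q t Hp Hq Ht.
  destruct (Req_dec t 0) as [->|Ht0].
  - replace (vlin 0 p (1 - 0) q) with q by (extensionality i; unfold vlin; ring). lra.
  - destruct (Req_dec t 1) as [->|Ht1].
    + replace (vlin 1 p (1 - 1) q) with p by (extensionality i; unfold vlin; ring). lra.
    + destruct (classic (p = q)) as [<-|Hpq].
      * replace (vlin t p (1 - t) p) with p by (extensionality i; unfold vlin; ring). lra.
      * apply Rlt_le, Hg; auto; lra.
Qed.

(** * Bregman distances of a C^1 function on a convex set *)

Section Bregman.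

Variables (m : nat) (Dom : vec -> Prop) (h : vec -> R) (gh : vec -> vec).
Hypothesis (HDom : convex_subset Dom) (HC : C1_on m Dom h gh).

Lemma C1_on_segment_slope v l : Dom v -> Dom l -> forall eps, 0 < eps ->
  exists t, 0 < t < 1 /\
    Rabs (h (vlin t l (1 - t) v) - h v - t * dot m (gh v) (vsub l v)) <= t * eps.
Proof.
  intros Hv Hl eps Heps. destruct HC as [_ [Happrox _]].
  set (N := vnorm m (vsub l v)). assert (HN : 0 <= N) by apply sqrt_pos.
  destruct (Happrox v (eps / (N + 1)) Hv) as [delta [Hdelta Hclose]].
  { apply Rdiv_lt_0_compat; lra. }
  set (t := Rmin (1 / 2) (delta / (2 * (N + 1)))).
  assert (Ht : 0 < t < 1).
  { split; [apply Rmin_glb_lt; [lra | apply Rdiv_lt_0_compat; lra] |].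
    pose proof (Rmin_l (1 / 2) (delta / (2 * (N + 1)))) as Hmin. fold t in Hmin. lra. }
  assert (HtN : t * N < delta).
  { assert (Htd : t * (2 * (N + 1)) <= delta).
    { pose proof (Rmin_r (1 / 2) (delta / (2 * (N + 1)))) as Hmin. fold t in Hmin.
      apply Rmult_le_compat_r with (r := 2 * (N + 1)) in Hmin; [| lra].
      unfold Rdiv in Hmin. rewrite Rmult_assoc, Rinv_l, Rmult_1_r in Hmin; lra. }
    nra. }
  exists t. split; [exact Ht |].
  assert (Hseg : vsub (vlin t l (1 - t) v) v = fun i => t * vsub l v i)
    by (extensionality i; unfold vsub, vlin; ring).
  specialize (Hclose _ (HDom l v t Hl Hv ltac:(lra))).
  rewrite Hseg, vnorm_scal, dot_scal_r in Hclose by lra. fold N in Hclose.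
  eapply Rle_trans; [apply Hclose; exact HtN |].
  assert (E : eps / (N + 1) * (t * N) = t * eps * (N / (N + 1))) by (field; lra).
  rewrite E. assert (Hfrac : N / (N + 1) <= 1) by (apply Rmult_le_reg_r with (N + 1); [lra |];
    unfold Rdiv; rewrite Rmult_assoc, Rinv_l; lra).
  assert (0 <= t * eps) by nra. nra.
Qed.

Lemma le_grad_of_segment v l K : Dom v -> Dom l ->
  (forall t, 0 < t < 1 -> t * K <= h (vlin t l (1 - t) v) - h v) ->
  K <= dot m (gh v) (vsub l v).
Proof.
  intros Hv Hl HK. apply Rle_plus_epsilon. intros eps Heps.
  destruct (C1_on_segment_slope v l Hv Hl eps Heps) as [t [Ht Hslope]].
  specialize (HK t Ht). pose proof (Rle_trans _ _ _ (Rle_abs _) Hslope). nra.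
Qed.

Lemma grad_le_of_segment v l K : Dom v -> Dom l ->
  (forall t, 0 < t < 1 -> h (vlin t l (1 - t) v) - h v <= t * K) ->
  dot m (gh v) (vsub l v) <= K.
Proof.
  intros Hv Hl HK. apply Rle_plus_epsilon. intros eps Heps.
  destruct (C1_on_segment_slope v l Hv Hl eps Heps) as [t [Ht Hslope]].
  specialize (HK t Ht). rewrite <- Rabs_Ropp in Hslope.
  pose proof (Rle_trans _ _ _ (Rle_abs _) Hslope).
  nra.
Qed.

Lemma Breg_nonneg u w : convex_on Dom h -> Dom u -> Dom w -> 0 <= Breg m h gh u w.
Proof.
  intros Hconv Hu Hw. unfold Breg.
  enough (dot m (gh w) (vsub u w) <= h u - h w) by lra.
  apply grad_le_of_segment; auto.
  intros t Ht. specialize (Hconv u w t Hu Hw ltac:(lra)). lra.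
Qed.

Lemma argmax_Breg_gap c Phi v : 0 < c -> Dom v ->
  (forall l, Dom l -> Phi l <= Phi v) -> affine (fun l => Phi l + c * h l) ->
  forall l, Dom l -> Phi l <= Phi v - c * Breg m h gh l v.
Proof.
  intros Hc Hv Hmax Haff l Hl.
  set (K := Phi l + c * h l - Phi v - c * h v).
  enough (Hgrad : K / c <= dot m (gh v) (vsub l v)).
  { unfold Breg. apply Rmult_le_compat_l with (r := c) in Hgrad; [| lra].
    replace (c * (K / c)) with K in Hgrad by (field; lra). unfold K in Hgrad. lra. }
  apply le_grad_of_segment; auto.
  intros t Ht. specialize (Haff l v t). specialize (Hmax _ (HDom l v t Hl Hv ltac:(lra))).
  cbv beta in Haff. apply Rmult_le_reg_l with c; [lra |].
  replace (c * (t * (K / c))) with (t * K) by (field; lra). unfold K. nra.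
Qed.

End Bregman.

Lemma Breg_three_point m h gh u a b :
  dot m (vsub (gh a) (gh b)) (vsub u a) = Breg m h gh u b - Breg m h gh u a - Breg m h gh a b.
Proof. unfold Breg. rewrite dot_vsub_l, (dot_vsub_r m (gh b) u a b). ring. Qed.

Definition wavg (w : nat -> R) (z : nat -> vec) (T : nat) : vec :=
  fun i => rsum T (fun k => w k * z k i) / rsum T w.

Lemma jensen_wavg (Dom : vec -> Prop) (F : vec -> R) (w : nat -> R) (z : nat -> vec) :
  convex_subset Dom -> convex_on Dom F -> (forall k, 0 < w k) -> (forall k, Dom (z k)) ->
  forall T, Dom (wavg w z (S T)) /\
    rsum (S T) w * F (wavg w z (S T)) <= rsum (S T) (fun k => w k * F (z k)).
Proof.
  intros HDom HF Hw Hz T. induction T as [|T [IHdom IHle]].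
  - replace (wavg w z 1) with (z 0%nat).
    + split; [apply Hz | simpl; lra].
    + extensionality i. unfold wavg. simpl. specialize (Hw 0%nat). field. lra.
  - pose proof (rsum_pos T w Hw). pose proof (Hw (S T)).
    set (W := rsum (S T) w) in *.
    set (t := W / (W + w (S T))).
    assert (Ht : 0 <= t <= 1).
    { unfold t. split; [apply Rlt_le, Rdiv_lt_0_compat; lra |].
      apply Rmult_le_reg_r with (W + w (S T)); [lra |]. field_simplify; lra. }
    assert (Hsplit : wavg w z (S (S T)) = vlin t (wavg w z (S T)) (1 - t) (z (S T))).
    { extensionality i. unfold wavg, vlin, t. rewrite !(rsum_S (S T)). fold W. field. lra. }
    rewrite Hsplit. split; [apply HDom; auto |].
    specialize (HF _ _ t IHdom (Hz (S T)) Ht).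
    rewrite !(rsum_S (S T)). fold W.
    assert (E1 : (W + w (S T)) * t = W) by (unfold t; field; lra).
    assert (E2 : (W + w (S T)) * (1 - t) = w (S T)) by (unfold t; field; lra).
    apply Rmult_le_compat_l with (r := W + w (S T)) in HF; [| lra].
    rewrite Rmult_plus_distr_l, <- !Rmult_assoc, E1, E2 in HF. lra.
Qed.

(** * Analysis of acc-BALM *)

Section AccBALM.

Variables (m n : nat) (ineq : bool) (f : vec -> R) (X : vec -> Prop)
  (A : nat -> nat -> R) (b : vec) (h : vec -> R) (gh : vec -> vec) (d : vec -> R) (G : R)
  (eta theta : nat -> R) (x lam v y : nat -> vec) (lamstar : vec) (dstar : R).

Local Notation Lam := (LamSet m ineq).
Local Notation L := (Lag m n f A b).
Local Notation D := (Breg m h gh).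

(* [dual_model j] is the linear model of [d] at [lam (S j)] built from the [lam]-step;
   [estimate k] is the function maximized in the [v]-step. *)
Definition dual_model (j : nat) (l : vec) : R :=
  d (lam (S j)) + / eta j * dot m (vsub (gh (lam (S j))) (gh (y j))) (vsub l (lam (S j))).

Definition estimate (k : nat) (l : vec) : R :=
  - G * D l (lam 0%nat) + rsum (S k) (fun j => eta j / theta j * dual_model j l).

Hypothesis Hd : forall l, Lam l -> (exists r, lower_bd X L l r) -> is_dual_value X L l (d l).
Hypothesis Hhconv : convex_on Lam h.
Hypothesis HhC1 : C1_on m Lam h gh.
Hypothesis Hstar : Lam lamstar.
Hypothesis Hdstar_lb : lower_bd X L lamstar dstar.
Hypothesis Hdstar_max : forall l r, Lam l -> lower_bd X L l r -> r <= dstar.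
Hypothesis HG : 1 <= G.
Hypothesis HTSP : triangle_scaling Lam D G.
Hypothesis Hlam0 : Lam (lam 0%nat).
Hypothesis Hv0 : v 0%nat = lam 0%nat.
Hypothesis Htheta0 : theta 0%nat = 1.
Hypothesis Heta : forall k, 0 < eta k.
Hypothesis Hy : forall k, y k = vlin (theta k) (v k) (1 - theta k) (lam k).
Hypothesis Hsaddle : forall k, X (x (S k)) /\ Lam (lam (S k)) /\
  forall z l, X z -> Lam l ->
    L (x (S k)) l - / eta k * D l (y k) <= L (x (S k)) (lam (S k)) - / eta k * D (lam (S k)) (y k)
    /\ L (x (S k)) (lam (S k)) - / eta k * D (lam (S k)) (y k) <= L z (lam (S k)) - / eta k * D (lam (S k)) (y k).
Hypothesis Hv : forall k, Lam (v (S k)) /\ forall l, Lam l -> estimate k l <= estimate k (v (S k)).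
Hypothesis Htheta : forall k, 0 < theta (S k) <= 1 /\
  eta k / theta k ^ 2 = eta (S k) / theta (S k) ^ 2 - eta (S k) / theta (S k).

Lemma theta_range k : 0 < theta k <= 1.
Proof. destruct k as [|k]; [rewrite Htheta0; lra | apply Htheta]. Qed.

Lemma weight_pos k : 0 < eta k / theta k.
Proof. apply Rdiv_lt_0_compat; [apply Heta | apply theta_range]. Qed.

Lemma rsum_weights k : rsum (S k) (fun j => eta j / theta j) = eta k / theta k ^ 2.
Proof.
  induction k as [|k IHk].
  - simpl. rewrite Htheta0. field.
  - rewrite rsum_S, IHk, (proj2 (Htheta k)). ring.
Qed.

Lemma lam_in k : Lam (lam k).
Proof. destruct k as [|k]; [exact Hlam0 | apply Hsaddle]. Qed.

Lemma v_in k : Lam (v k).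
Proof. destruct k as [|k]; [rewrite Hv0; exact Hlam0 | apply Hv]. Qed.

Lemma y_in k : Lam (y k).
Proof.
  rewrite Hy. pose proof (theta_range k).
  apply LamSet_convex; [apply v_in | apply lam_in | lra].
Qed.

Lemma D_nonneg p q : Lam p -> Lam q -> 0 <= D p q.
Proof. apply Breg_nonneg; auto using LamSet_convex. Qed.

Lemma dual_at_iterate k : d (lam (S k)) = L (x (S k)) (lam (S k)).
Proof.
  destruct (Hsaddle k) as [Hx [Hl Hs]].
  assert (Hlb : lower_bd X L (lam (S k)) (L (x (S k)) (lam (S k)))).
  { intros z Hz. destruct (Hs z (lam (S k)) Hz Hl). lra. }
  destruct (Hd (lam (S k)) Hl (ex_intro _ _ Hlb)) as [Hdlb Hdmax].
  apply Rle_antisym; [apply Hdlb, Hx | apply Hdmax, Hlb].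
Qed.

Lemma dual_le_Lag k z : X z -> d (lam (S k)) <= L z (lam (S k)).
Proof.
  intros Hz. rewrite dual_at_iterate.
  destruct (Hsaddle k) as [_ [Hl Hs]]. destruct (Hs z (lam (S k)) Hz Hl). lra.
Qed.

Lemma Lag_le_dual_model k l : Lam l -> L (x (S k)) l <= dual_model k l.
Proof.
  intros Hl. destruct (Hsaddle k) as [Hx [HlS Hs]]. pose proof (Heta k).
  assert (Hgap := argmax_Breg_gap m Lam h gh (LamSet_convex m ineq) HhC1 (/ eta k)
    (fun l => L (x (S k)) l - / eta k * D l (y k)) (lam (S k))
    ltac:(apply Rinv_0_lt_compat; lra) HlS
    ltac:(intros l' Hl'; exact (proj1 (Hs (x (S k)) l' Hx Hl')))).
  assert (Haff : affine (fun l => L (x (S k)) l - / eta k * D l (y k) + / eta k * h l))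
    by (intros p q t; rewrite Lag_affine; unfold Breg; rewrite dot_vsub_affine; ring).
  specialize (Hgap Haff l Hl). cbv beta in Hgap.
  unfold dual_model. rewrite (Breg_three_point m h gh), dual_at_iterate. lra.
Qed.

Lemma dual_model_affine k : affine (dual_model k).
Proof. intros p q t. unfold dual_model. rewrite dot_vsub_affine. ring. Qed.

Lemma estimate_gap k l : Lam l -> estimate k l <= estimate k (v (S k)) - G * D l (v (S k)).
Proof.
  apply (argmax_Breg_gap m Lam h gh (LamSet_convex m ineq) HhC1); [lra | apply v_in | apply Hv |].
  intros p q t. unfold estimate, Breg. rewrite dot_vsub_affine.
  rewrite (rsum_ext _ _ (fun j => t * (eta j / theta j * dual_model j p)
                          + (1 - t) * (eta j / theta j * dual_model j q)))
    by (intros j; rewrite dual_model_affine; ring).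
  rewrite rsum_linear. ring.
Qed.

(* Triangle scaling is what makes the accelerated step work: the extrapolation
   [y (S k)] and the candidate point [u] share the same convex weight on [lam (S k)]. *)
Lemma dual_model_convex_comb k w : Lam w ->
  dual_model (S k) (vlin (1 - theta (S k)) (lam (S k)) (theta (S k)) w)
  <= d (lam (S (S k))) + G * theta (S k) ^ 2 / eta (S k) * D w (v (S k)).
Proof.
  intros Hw. pose proof (theta_range (S k)). pose proof (Heta (S k)).
  set (th := theta (S k)) in *. set (u := vlin (1 - th) (lam (S k)) th w).
  assert (Hu : Lam u).
  { unfold u. replace th with (1 - (1 - th)) at 2 by ring.
    apply LamSet_convex; [apply lam_in | exact Hw | lra]. }
  assert (Hyk : y (S k) = vlin (1 - th) (lam (S k)) th (v (S k)))
    by (rewrite Hy; extensionality i; unfold vlin, th; ring).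
  assert (Hscale := HTSP (lam (S k)) w (v (S k)) th (lam_in _) Hw (v_in _) ltac:(lra)).
  fold u in Hscale. rewrite <- Hyk in Hscale.
  pose proof (D_nonneg u (lam (S (S k))) Hu (lam_in _)).
  pose proof (D_nonneg (lam (S (S k))) (y (S k)) (lam_in _) (y_in _)).
  unfold dual_model. rewrite (Breg_three_point m h gh).
  assert (Hle : / eta (S k) * (D u (y (S k)) - D u (lam (S (S k))) - D (lam (S (S k))) (y (S k)))
                <= / eta (S k) * (G * th ^ 2 * D w (v (S k)))).
  { apply Rmult_le_compat_l; [apply Rlt_le, Rinv_0_lt_compat |]; lra. }
  unfold Rdiv. lra.
Qed.

Lemma estimate_at_v_le k : estimate k (v (S k)) <= eta k / theta k ^ 2 * d (lam (S k)).
Proof.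
  induction k as [|k IHk].
  - assert (Hy0 : y 0%nat = lam 0%nat)
      by (rewrite Hy, Hv0, Htheta0; extensionality i; unfold vlin; ring).
    unfold estimate, dual_model. simpl rsum. rewrite (Breg_three_point m h gh), Hy0, Htheta0.
    pose proof (Heta 0%nat).
    pose proof (D_nonneg (v 1%nat) (lam 1%nat) (v_in _) (lam_in _)).
    pose proof (D_nonneg (lam 1%nat) (lam 0%nat) (lam_in _) (lam_in _)).
    pose proof (D_nonneg (v 1%nat) (lam 0%nat) (v_in _) (lam_in _)).
    set (E := D (v 1%nat) (lam 0%nat) - D (v 1%nat) (lam 1%nat) - D (lam 1%nat) (lam 0%nat)).
    replace (eta 0%nat / 1 * (d (lam 1%nat) + / eta 0%nat * E))
      with (eta 0%nat * d (lam 1%nat) + E) by (field; lra).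
    replace (eta 0%nat / 1 ^ 2) with (eta 0%nat) by field.
    unfold E. nra.
  - set (th := theta (S k)). set (a := eta (S k) / th ^ 2).
    destruct (Htheta k) as [Hth Hrec]. fold th a in Hth, Hrec. pose proof (Heta (S k)) as Heta_k.
    assert (Ha : 0 < a) by (apply Rdiv_lt_0_compat; [| apply pow_lt]; lra).
    set (w := v (S (S k))).
    assert (Hprev : estimate k w <= eta k / theta k ^ 2 * d (lam (S k)) - G * D w (v (S k)))
      by (pose proof (estimate_gap k w (v_in _)); lra).
    assert (Hdnext : d (lam (S k)) <= dual_model (S k) (lam (S k))).
    { eapply Rle_trans; [apply dual_le_Lag, (Hsaddle (S k)) | apply Lag_le_dual_model, lam_in]. }
    assert (Hcomb := dual_model_convex_comb k w (v_in _)). fold th in Hcomb.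
    assert (Haff := dual_model_affine (S k) (lam (S k)) w (1 - th)).
    replace (1 - (1 - th)) with th in Haff by ring.
    assert (Hsplit : estimate (S k) w = estimate k w + eta (S k) / th * dual_model (S k) w)
      by (unfold estimate, th; rewrite (rsum_S (S k)); ring).
    assert (Hw : eta (S k) / th = a * th) by (unfold a; field; lra).
    rewrite Hrec, Hw in Hprev. rewrite Hsplit, Hw.
    replace (G * th ^ 2 / eta (S k)) with (G / a) in Hcomb by (unfold a; field; lra).
    assert (Hdnext_a : a * (1 - th) * d (lam (S k)) <= a * (1 - th) * dual_model (S k) (lam (S k)))
      by (apply Rmult_le_compat_l; [apply Rmult_le_pos |]; lra).
    assert (Hcomb_a : a * dual_model (S k) (vlin (1 - th) (lam (S k)) th w)
            <= a * d (lam (S (S k))) + G * D w (v (S k))).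
    { apply Rmult_le_compat_l with (r := a) in Hcomb; [| lra].
      replace (a * (d (lam (S (S k))) + G / a * D w (v (S k))))
        with (a * d (lam (S (S k))) + G * D w (v (S k))) in Hcomb by (field; lra).
      exact Hcomb. }
    rewrite Haff in Hcomb_a. lra.
Qed.

Lemma weighted_dstar_le k :
  rsum (S k) (fun j => eta j / theta j) * dstar <= estimate k lamstar + G * D lamstar (lam 0%nat).
Proof.
  unfold estimate. rewrite Rmult_comm, <- rsum_scal.
  enough (rsum (S k) (fun j => dstar * (eta j / theta j))
          <= rsum (S k) (fun j => eta j / theta j * dual_model j lamstar)) by lra.
  apply rsum_le. intros j _. rewrite Rmult_comm.
  apply Rmult_le_compat_l; [apply Rlt_le, weight_pos |].
  eapply Rle_trans; [apply Hdstar_lb, (Hsaddle j) | apply Lag_le_dual_model, Hstar].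
Qed.

Lemma weighted_dual_gap k :
  eta k / theta k * dstar <= eta k / theta k * d (lam (S k)) + G * D lamstar (lam 0%nat) * theta k.
Proof.
  pose proof (theta_range k) as Hth.
  assert (Hest : estimate k lamstar <= eta k / theta k ^ 2 * d (lam (S k)))
    by (eapply Rle_trans; [apply Hv, Hstar | apply estimate_at_v_le]).
  pose proof (weighted_dstar_le k) as Hdstar. rewrite rsum_weights in Hdstar.
  replace (eta k / theta k) with (theta k * (eta k / theta k ^ 2)) by (field; lra).
  apply Rmult_le_compat_l with (r := theta k) in Hdstar; [| lra].
  apply Rmult_le_compat_l with (r := theta k) in Hest; [| lra].
  nra.
Qed.

Lemma weighted_gap_bound T z l : X z -> Lam l ->
  rsum (S T) (fun k => eta k / theta k * L (x (S k)) l)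
  - rsum (S T) (fun k => eta k / theta k * L z (lam (S k)))
  <= G * D l (lam 0%nat) + G * D lamstar (lam 0%nat) * rsum (S T) theta.
Proof.
  intros Hz Hl.
  assert (Hprimal : rsum (S T) (fun k => eta k / theta k * L (x (S k)) l)
                    <= estimate T l + G * D l (lam 0%nat)).
  { unfold estimate. enough (rsum (S T) (fun k => eta k / theta k * L (x (S k)) l)
      <= rsum (S T) (fun k => eta k / theta k * dual_model k l)) by lra.
    apply rsum_le. intros k _.
    apply Rmult_le_compat_l; [apply Rlt_le, weight_pos | apply Lag_le_dual_model, Hl]. }
  assert (Hest : estimate T l <= eta T / theta T ^ 2 * dstar).
  { eapply Rle_trans; [apply Hv, Hl |]. eapply Rle_trans; [apply estimate_at_v_le |].
    apply Rmult_le_compat_l.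
    - rewrite <- rsum_weights. apply Rlt_le, rsum_pos, weight_pos.
    - apply (Hdstar_max _ _ (lam_in (S T))). intros z' Hz'. apply dual_le_Lag, Hz'. }
  assert (Hgap : rsum (S T) (fun k => eta k / theta k * dstar)
      <= rsum (S T) (fun k => 1 * (eta k / theta k * d (lam (S k)))
                              + G * D lamstar (lam 0%nat) * theta k))
    by (apply rsum_le; intros k _; pose proof (weighted_dual_gap k); lra).
  rewrite rsum_linear in Hgap.
  rewrite (rsum_ext _ _ (fun k => dstar * (eta k / theta k))), rsum_scal, rsum_weights in Hgap
    by (intros; ring).
  assert (Hdual : rsum (S T) (fun k => eta k / theta k * d (lam (S k)))
                  <= rsum (S T) (fun k => eta k / theta k * L z (lam (S k)))).
  { apply rsum_le. intros k _.
    apply Rmult_le_compat_l; [apply Rlt_le, weight_pos | apply dual_le_Lag, Hz]. }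
  lra.
Qed.

End AccBALM.

Theorem mainTheorem11
  (m n : nat) (ineq : bool)
  (f : vec -> R) (X : vec -> Prop) (A : nat -> nat -> R) (b : vec)
  (h : vec -> R) (gh : vec -> vec) (d : vec -> R) (G : R)
  (eta theta : nat -> R) (x lam v y : nat -> vec) (lamstar : vec)
  (* problem data *)
  (HXsupp : forall z, X z -> supp n z)
  (HXclosed : closed_subset n X) (HXconv : convex_subset X)
  (Hbsupp : supp m b)
  (Hfconv : convex_on (supp n) f) (Hflsc : lsc_on n (supp n) f)
  (Hfcoer : coercive_on n (supp n) f)
  (* the dual function d(lam) = inf_{x in X} L(x, lam), wherever this is finite *)
  (Hd : forall l, LamSet m ineq l -> (exists r, lower_bd X (Lag m n f A b) l r) ->
          is_dual_value X (Lag m n f A b) l (d l))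
  (* the distance-generating function h *)
  (Hhcoer : coercive_on m (LamSet m ineq) h)
  (Hhsconv : strictly_convex_on (LamSet m ineq) h)
  (HhC1 : C1_on m (LamSet m ineq) h gh)
  (* lamstar maximizes d over Lambda; triangle scaling with G >= 1 *)
  (Hstar : dual_maximizer X (LamSet m ineq) (Lag m n f A b) lamstar)
  (HG : 1 <= G) (HTSP : triangle_scaling (LamSet m ineq) (Breg m h gh) G)
  (* acc-BALM *)
  (Hlam0 : LamSet m ineq (lam 0%nat)) (Hv0 : v 0%nat = lam 0%nat)
  (Htheta0 : theta 0%nat = 1)
  (Heta : forall k, 0 < eta k)
  (Hy : forall k, y k = vlin (theta k) (v k) (1 - theta k) (lam k))
  (Hsaddle : forall k, X (x (S k)) /\ LamSet m ineq (lam (S k)) /\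
     forall z l, X z -> LamSet m ineq l ->
       Lag m n f A b (x (S k)) l - / eta k * Breg m h gh l (y k)
         <= Lag m n f A b (x (S k)) (lam (S k)) - / eta k * Breg m h gh (lam (S k)) (y k)
       /\ Lag m n f A b (x (S k)) (lam (S k)) - / eta k * Breg m h gh (lam (S k)) (y k)
         <= Lag m n f A b z (lam (S k)) - / eta k * Breg m h gh (lam (S k)) (y k))
  (Hv : forall k, LamSet m ineq (v (S k)) /\
     forall l, LamSet m ineq l ->
       - G * Breg m h gh l (lam 0%nat)
         + rsum (S k) (fun j => eta j / theta j *
             (d (lam (S j)) + / eta j * dot m (vsub (gh (lam (S j))) (gh (y j))) (vsub l (lam (S j)))))
       <= - G * Breg m h gh (v (S k)) (lam 0%nat)
         + rsum (S k) (fun j => eta j / theta j *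
             (d (lam (S j)) + / eta j * dot m (vsub (gh (lam (S j))) (gh (y j))) (vsub (v (S k)) (lam (S j))))))
  (Htheta : forall k, 0 < theta (S k) <= 1 /\
     eta k / theta k ^ 2 = eta (S k) / theta (S k) ^ 2 - eta (S k) / theta (S k)) :
  forall (T : nat), (1 <= T)%nat ->
  forall (z l : vec), X z -> LamSet m ineq l ->
    Lag m n f A b (ergavg eta theta x T) l - Lag m n f A b z (ergavg eta theta lam T)
    <= (G * Breg m h gh l (lam 0%nat)
        + G * Breg m h gh lamstar (lam 0%nat) * rsum T theta)
       / rsum T (fun k => eta k / theta k).
Proof.
  intros T HT z l Hz Hl. destruct T as [|K]; [lia |].
  destruct Hstar as [HstarL [dstar [[Hdstar_lb _] Hdstar_max]]].
  set (w := fun k => eta k / theta k).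
  assert (Hw : forall k, 0 < w k) by (intros k; eapply weight_pos; eauto).
  assert (Hgap := weighted_gap_bound m n ineq f X A b h gh d G eta theta x lam v y lamstar dstar
    Hd (convex_on_strictly _ _ Hhsconv) HhC1 HstarL Hdstar_lb Hdstar_max HG HTSP
    Hlam0 Hv0 Htheta0 Heta Hy Hsaddle Hv Htheta K z l Hz Hl).
  destruct (jensen_wavg (supp n) (fun p => Lag m n f A b p l) w (fun k => x (S k))
    (supp_convex n) (Lag_convex m n f A b l Hfconv) Hw
    (fun k => HXsupp _ (proj1 (Hsaddle k))) K) as [_ Hprimal].
  destruct (jensen_wavg (fun _ => True) (fun p => - Lag m n f A b z p) w (fun k => lam (S k))
    (fun _ _ _ _ _ _ => I) (convex_on_opp_affine _ _ (Lag_affine m n f A b z)) Hw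
    (fun _ => I) K) as [_ Hdual].
  change (ergavg eta theta x (S K)) with (wavg w (fun k => x (S k)) (S K)).
  change (ergavg eta theta lam (S K)) with (wavg w (fun k => lam (S k)) (S K)).
  change (rsum (S K) (fun k => eta k / theta k)) with (rsum (S K) w).
  rewrite (rsum_ext _ (fun k => w k * - Lag m n f A b z (lam (S k)))
    (fun k => (-1) * (w k * Lag m n f A b z (lam (S k))))), rsum_scal in Hdual by (intros; ring).
  pose proof (rsum_pos K w Hw) as Hpos.
  apply Rmult_le_reg_l with (rsum (S K) w); [exact Hpos |].
  unfold Rdiv. rewrite (Rmult_comm _ (/ _)), <- Rmult_assoc, Rinv_r, Rmult_1_l by lra.
  unfold w in *. lra.
Qed.
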